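(* Let $\mathcal{K}$ be a learning space (respectively, a well-graded $\cup$-closed family) on a domain $Q=\bigcup\mathcal{K}$ with $|Q|\ge 2$, and let $Q'$ be a proper non-empty subset of $Q$. Then: (i) the projection $\mathcal{K}_{|Q'}$ is a learning space (respectively, a well-graded $\cup$-closed family); (ii) in either case, every $Q'$-child of $\mathcal{K}$ is a well-graded $\cup$-closed family.
   Context: All sets are finite. $d(K,L)=|K\triangle L|$. A family is well-graded if any two distinct members $K,L$ are joined by a sequence $K_0=K,\dots,K_n=L$ of members with $n=d(K,L)$ and $d(K_i,K_{i+1})=1$. A family is $\cup$-closed if the union of any non-empty subfamily belongs to it. A knowledge structure is a family $\mathcal{K}$ of subsets of $Q=\bigcup\mathcal{K}\neq\varnothing$ with $\varnothing\in\mathcal{K}$. A learning space is a knowledge structure satisfying: [L1] for $K\subset L$ in $\mathcal{K}$ with $|L\setminus K|=n$ there is a chain $K=K_0\subset\dots\subset K_n=L$ with $K_{i+1}=K_i\cup\{q_i\}\in\mathcal{K}$, $q_i\notin K_i$; [L2] if $K\subset L$ in $\mathcal{K}$ and $K\cup\{q\}\in\mathcal{K}$ with $q\notin K$ then $L\cup\{q\}\in\mathcal{K}$. For $Q'\subset Q$: $K\sim L$ iff $K\cap Q'=L\cap Q'$, $[K]$ the equivalence class of $K$; projection $\mathcal{K}_{|Q'}=\{K\cap Q':K\in\mathcal{K}\}$; the $Q'$-child of $\mathcal{K}$ determined by $K$ is $\mathcal{K}_{[K]}=\{L\setminus\bigcap[K]: L\in\mathcal{K}, L\sim K\}$ (it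 may equal $\{\varnothing\}$, which is regarded as well-graded and $\cup$-closed). *)

From mathcomp Require Import all_boot.
Set Implicit Arguments. Unset Strict Implicit. Unset Printing Implicit Defensive.

Section Fam.
Variable T : finType.
Implicit Types (F : {set {set T}}) (A B Qp : {set T}).

Definition domain F : {set T} := \bigcup_(X in F) X.

Definition sdiff A B : {set T} := (A :\: B) :|: (B :\: A).
Definition dist A B : nat := #|sdiff A B|.

Definition well_graded F : Prop :=
  forall K L, K \in F -> L \in F -> K != L ->
    exists s : seq {set T},
      [/\ all (fun X => X \in F) s,
          path (fun X Y => dist X Y == 1) K s,
          last K s = L &
          size s = dist K L].

Definition union_closed F : Prop :=
  forall S : {set {set T}}, S \subset F -> S != set0 ->
    \bigcup_(X in S) X \in F.

Definition wg_uclosed F : Prop := well_graded F /\ union_closed F.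

Definition knowledge_structure F : Prop :=
  set0 \in F /\ domain F != set0.

Definition L1 F : Prop :=
  forall K L, K \in F -> L \in F -> K \proper L ->
    exists s : seq {set T},
      [/\ all (fun X => X \in F) s,
          path (fun X Y : {set T} => [exists q : T, (q \notin X) && (Y == q |: X)]) K s,
          last K s = L &
          size s = #|L :\: K|].

Definition L2 F : Prop :=
  forall K L q, K \in F -> L \in F -> K \proper L ->
    q \notin K -> q |: K \in F -> q |: L \in F.

Definition learning_space F : Prop :=
  [/\ knowledge_structure F, L1 F & L2 F].

Definition proj F Qp : {set {set T}} := [set X :&: Qp | X in F].

Definition eqclass F Qp K : {set {set T}} :=
  [set L in F | L :&: Qp == K :&: Qp].

Definition child F Qp K : {set {set T}} :=
  [set L :\: (\bigcap_(M in eqclass F Qp K) M) | L in eqclass F Qp K].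

End Fam.

(* For a union-closed family, well-gradedness, axiom [L1] and augmentability
   (every strict inclusion [A \proper U] of members can be grown inside the
   family by one point of [U]) coincide, and [L2] holds automatically.
   Conversely [L2] carries [A :|: X] up a chain from [set0] to [B], so a
   learning space is union-closed. Both hypotheses thus reduce to
   "augmentable and union-closed", a property preserved by projections,
   equivalence classes and the removal of a common subset: a chain from [A]
   up to [A :|: U] first changes its trace on [Q] by a single point, and a
   class is augmented by points outside [Q]. *)

From mathcomp Require Import all_boot.
From mathcomp Require Import zify.
Set Implicit Arguments. Unset Strict Implicit. Unset Printing Implicit Defensive.

Section SetFamilies.
Variable T : finType.
Implicit Types (F : {set {set T}}) (A B C K L M U X Y Q : {set T}).

Lemma in_sdiff A B y : (y \in sdiff A B) = (y \in A) (+) (y \in B).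
Proof. by rewrite !inE; case: (y \in A); case: (y \in B). Qed.

Lemma distC A B : dist A B = dist B A.
Proof. by rewrite /dist /sdiff setUC. Qed.

Lemma dist_setD A B : dist A B = #|A :\: B| + #|B :\: A|.
Proof.
rewrite /dist /sdiff -cardsUI.
suff -> : (A :\: B) :&: (B :\: A) = set0 by rewrite cards0 addn0.
by apply/setP=> y; rewrite !inE; case: (y \in A); case: (y \in B); rewrite ?andbF.
Qed.

Lemma dist_triangle A B C : dist A C <= dist A B + dist B C.
Proof.
rewrite /dist; apply: leq_trans (leq_card_setU _ _).
apply: subset_leq_card; apply/subsetP=> y; rewrite in_setU !in_sdiff.
by case: (y \in A); case: (y \in B); case: (y \in C).
Qed.

Lemma dist_path_last A s :
  path (fun X Y => dist X Y == 1) A s -> dist A (last A s) <= size s.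
Proof.
elim: s A => [|B s IH] A /=; first by rewrite /dist /sdiff !setDv setU0 cards0.
case/andP=> /eqP dAB pB; apply: leq_trans (dist_triangle A B _) _.
by rewrite dAB add1n ltnS IH.
Qed.

(* Toggling one point [x] moves the distance to [U] down by one exactly when
   [A] and [U] disagree at [x], and up by one otherwise. *)
Lemma dist_toggle A C U x : sdiff A C = [set x] ->
  dist C U + (x \in sdiff A U) = dist A U + (x \notin sdiff A U).
Proof.
move=> dAC; have inC y : (y \in C) = (y \in A) (+) (y == x).
  by move/setP/(_ y): dAC; rewrite in_sdiff inE => <-; case: (y \in A); case: (y \in C).
have sameD : sdiff C U :\ x = sdiff A U :\ x.
  apply/setP=> y; rewrite !in_setD1 !in_sdiff inC.
  by have [->|] := eqVneq y x; rewrite ?addbF.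
rewrite /dist (cardsD1 x (sdiff C U)) (cardsD1 x (sdiff A U)) sameD !in_sdiff inC eqxx.
by case: (x \in A); case: (x \in U) => /=; lia.
Qed.

Lemma cardsD_setU1 A U x : x \in U :\: A -> #|U :\: A| = #|U :\: (x |: A)|.+1.
Proof. by move=> xUA; rewrite (cardsD1 x) xUA setDDl setUC. Qed.

Definition covers X Y := [exists q, (q \notin X) && (Y == q |: X)].

Lemma coversP X Y : reflect (exists2 q, q \notin X & Y = q |: X) (covers X Y).
Proof.
apply: (iffP existsP) => [[q /andP[qX /eqP ->]]|[q qX ->]]; first by exists q.
by exists q; rewrite qX eqxx.
Qed.

Lemma covers_sub X Y : covers X Y -> X \subset Y.
Proof. by case/coversP=> q _ ->; apply: subsetUr. Qed.

Lemma covers_dist X Y : covers X Y -> dist X Y = 1.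
Proof.
case/coversP=> q qX ->; rewrite /dist (_ : sdiff _ _ = [set q]) ?cards1 //.
apply/setP=> y; rewrite in_sdiff !inE.
by have [->|] := eqVneq y q; [rewrite (negbTE qX) | case: (y \in X)].
Qed.

Lemma covers_path_sub X s : path covers X s -> X \subset last X s.
Proof.
elim: s X => //= Y s IH X /andP[/covers_sub XY /IH]; exact: subset_trans.
Qed.

Definition augmentable F :=
  {in F &, forall A U, A \proper U -> exists2 x, x \in U :\: A & x |: A \in F}.

Lemma augmentable_chain F A U : augmentable F -> A \in F -> U \in F -> A \subset U ->
  exists s, [/\ all (fun X => X \in F) s, path covers A s,
                last A s = U & size s = #|U :\: A|].
Proof.
move=> aug; move: {2}#|U :\: A| (erefl #|U :\: A|) => n.
elim: n A => [|n IH] A dUA AF UF AU.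
  exists [::]; split=> //; apply/eqP.
  by rewrite eqEsubset AU -setD_eq0 -cards_eq0 dUA.
have AU' : A \proper U by rewrite properE AU -setD_eq0 -cards_eq0 dUA.
have [x xUA xAF] := aug A U AF UF AU'.
have [xU xA] := setDP xUA.
have dUxA : #|U :\: (x |: A)| = n by move: dUA; rewrite (cardsD_setU1 xUA) => -[].
have [|s [sF sp sl ss]] := IH (x |: A) dUxA xAF UF.
  by rewrite subUset sub1set xU AU.
exists (x |: A :: s); split=> /=; rewrite ?xAF ?sp ?sl ?ss ?dUxA //.
by rewrite andbT; apply/coversP; exists x.
Qed.

Lemma L1_augmentable F : L1 F <-> augmentable F.
Proof.
split=> [chain A U AF UF AU | aug A U AF UF /proper_sub AU].
  have [s [sF p sU ss]] := chain A U AF UF AU.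
  case: s sF p sU ss => [|C s] /=.
    by move=> _ _ AU_eq; rewrite AU_eq properxx in AU.
  case/andP=> CF _ /andP[/coversP[x xA CE] p] sU _; exists x; rewrite -?CE //.
  by rewrite inE xA -sU (subsetP (covers_path_sub p)) // CE setU11.
exact: augmentable_chain.
Qed.

Lemma union_closedP F : union_closed F <-> {in F &, forall A B, A :|: B \in F}.
Proof.
split=> [uc A B AF BF | setU_F S /subsetP SF /set0Pn[A AS]].
  have -> : A :|: B = \bigcup_(X in [set A; B]) X by rewrite bigcup_setU !big_set1.
  apply: uc; last by apply/set0Pn; exists A; rewrite !inE eqxx.
  by apply/subsetP=> X; rewrite !inE => /orP[] /eqP ->.
rewrite -(setUidPr (bigcup_sup A AS)).
apply: (big_ind (fun X => A :|: X \in F)); rewrite ?setU0 ?SF //.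
- by move=> X Y AX AY; rewrite setUUr setU_F.
- by move=> X XS; rewrite setU_F ?SF.
Qed.

Lemma union_closed_L2 F : union_closed F -> L2 F.
Proof.
move/union_closedP=> setU_F K L q _ LF /proper_sub KL _ qKF.
by rewrite -(setUidPr KL) setUA setU_F.
Qed.

Lemma L2_setU_last F A X s : L2 F -> X \in F -> all (fun Y => Y \in F) s ->
  path covers X s -> A :|: X \in F -> A :|: last X s \in F.
Proof.
move=> L2F; elim: s X => //= Y s IH X XF /andP[YF sF] /andP[/coversP[q qX YE] p] AXF.
apply: IH => //; rewrite YE setUCA.
have [qAX|qAX] := boolP (q \in A :|: X); first by rewrite (setUidPr _) // sub1set.
have [XAX|XAX] := eqVneq X (A :|: X); first by rewrite -XAX -YE.
by apply: (L2F X); rewrite -?YE // properEneq XAX subsetUr.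
Qed.

Lemma learning_spaceP F :
  learning_space F <-> [/\ knowledge_structure F, augmentable F & union_closed F].
Proof.
split=> [[[F0 QF] /L1_augmentable aug L2F] | [ks aug uc]].
  split=> //; apply/union_closedP=> A B AF BF.
  have [s [sF p sB _]] := augmentable_chain aug F0 BF (sub0set B).
  by rewrite -sB; apply: L2_setU_last p _; rewrite ?setU0.
by split=> //; [apply/L1_augmentable | apply: union_closed_L2].
Qed.

Lemma augmentable_well_graded F : well_graded F -> augmentable F.
Proof.
move=> wg A U AF UF /properP[AU [y yU yA]].
have AU' : A != U by apply/eqP=> AU_eq; rewrite AU_eq yU in yA.
have [s [sF p sU ss]] := wg A U AF UF AU'.
case: s sF p sU ss => [_ _ /= AU_eq|C s /= /andP[CF _] /andP[/eqP dAC p] sU ss].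
  by rewrite AU_eq eqxx in AU'.
have [x dACx] : exists x, sdiff A C = [set x] by apply/cards1P; rewrite -/(dist A C) dAC.
have := dist_toggle U dACx; have := dist_path_last p; rewrite sU -ss.
have [xAU _ _|] := boolP (x \in sdiff A U); last by rewrite /=; lia.
have xA : x \notin A by apply/negP=> xA; move: xAU; rewrite in_sdiff xA (subsetP AU).
have xU : x \in U by move: xAU; rewrite in_sdiff (negbTE xA).
exists x; first by rewrite inE xA.
suff -> : x |: A = C by [].
move/setP: dACx => dACx; apply/setP=> z; move: (dACx z).
by rewrite in_sdiff !inE; have [->|] := eqVneq z x; rewrite ?(negbTE xA);
   case: (z \in A); case: (z \in C).
Qed.

(* Climb from [A] to [A :|: B], then descend along the reversed chain from [B]. *)
Lemma well_graded_augmentable F : augmentable F -> union_closed F -> well_graded F.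
Proof.
move=> aug /union_closedP setU_F A B AF BF _.
have ABF := setU_F A B AF BF.
have [s1 [s1F p1 s1l s1n]] := augmentable_chain aug AF ABF (subsetUl A B).
have [s2 [s2F p2 s2l s2n]] := augmentable_chain aug BF ABF (subsetUr A B).
exists (s1 ++ rev (belast B s2)); split.
- rewrite all_cat s1F all_rev /=; apply/allP=> X /mem_belast.
  by rewrite inE => /orP[/eqP -> //|]; apply/allP.
- rewrite cat_path (sub_path (fun X Y c => introT eqP (covers_dist c)) p1) s1l -s2l rev_path.
  by apply: sub_path p2 => X Y /covers_dist; rewrite distC => ->.
- rewrite last_cat s1l; case: s2 {s2F p2 s2n} s2l => [|Y s2] /= s2l; first by [].
  by rewrite rev_cons last_rcons.
- by rewrite size_cat size_rev size_belast s1n s2n setDUl setDUl !setDv set0U setU0 dist_setD addnC.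
Qed.

Lemma wg_uclosedP F : wg_uclosed F <-> augmentable F /\ union_closed F.
Proof.
split=> [[wg uc] | [aug uc]]; first by split=> //; apply: augmentable_well_graded.
by split=> //; apply: well_graded_augmentable.
Qed.

Lemma union_closed_imset F (f : {set T} -> {set T}) :
  {morph f : A B / A :|: B} -> union_closed F -> union_closed (f @: F).
Proof.
move=> fU /union_closedP setU_F; apply/union_closedP.
by move=> _ _ /imsetP[A AF ->] /imsetP[B BF ->]; rewrite -fU imset_f ?setU_F.
Qed.

Lemma domain_proj F Q : domain (proj F Q) = domain F :&: Q.
Proof.
apply/setP=> y; rewrite inE; apply/bigcupP/andP=> [[_ /imsetP[X XF ->]]|[]].
  by case/setIP=> yX yQ; split=> //; apply/bigcupP; exists X.
by case/bigcupP=> X XF yX yQ; exists (X :&: Q); [apply: imset_f | rewrite inE yX].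
Qed.

Lemma knowledge_structure_proj F Q :
  set0 \in F -> Q \subset domain F -> Q != set0 -> knowledge_structure (proj F Q).
Proof.
move=> F0 QF Q0; split; first by apply/imsetP; exists set0; rewrite ?set0I.
by rewrite domain_proj (setIidPr QF).
Qed.

Lemma union_closed_proj F Q : union_closed F -> union_closed (proj F Q).
Proof. by apply: union_closed_imset => A B; apply: setIUl. Qed.

Lemma setU1I_notin x A Q : x \notin Q -> (x |: A) :&: Q = A :&: Q.
Proof.
by move=> xQ; apply/setP=> y; rewrite !inE; have [->|] := eqVneq y x; rewrite ?(negbTE xQ) ?andbF.
Qed.

(* Each step of the chain adds one point, so the first change of trace adds a point of [Q]. *)
Lemma covers_path_trace F Q A s : all (fun X => X \in F) s -> path covers A s ->
  A :&: Q != last A s :&: Q ->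
  exists2 x, x \in (last A s :&: Q) :\: (A :&: Q) & x |: (A :&: Q) \in proj F Q.
Proof.
elim: s A => [|Y s IH] A /=; first by rewrite eqxx.
case/andP=> YF sF /andP[/coversP[q qA YE] p] AQ.
have [qQ|qQ] := boolP (q \in Q); last first.
  have YQ : Y :&: Q = A :&: Q by rewrite YE setU1I_notin.
  by rewrite -YQ in AQ *; apply: IH.
have YQ : Y :&: Q = q |: (A :&: Q) by rewrite YE setIUl (setIidPl _) // sub1set.
exists q; last by rewrite -YQ; apply: imset_f.
by rewrite !inE (negbTE qA) qQ andbT (subsetP (covers_path_sub p)) // YE setU11.
Qed.

Lemma augmentable_proj F Q : augmentable F -> union_closed F -> augmentable (proj F Q).
Proof.
move=> aug /union_closedP setU_F _ _ /imsetP[A AF ->] /imsetP[U UF ->] AUQ.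
have AUF := setU_F A U AF UF.
have AUQ_eq : (A :|: U) :&: Q = U :&: Q by rewrite setIUl (setUidPr (proper_sub AUQ)).
have [s [sF p sl _]] := augmentable_chain aug AF AUF (subsetUl A U).
rewrite -AUQ_eq -sl; apply: covers_path_trace sF p _.
by rewrite sl AUQ_eq proper_neq.
Qed.

Lemma augmentable_eqclass F Q K : augmentable F -> augmentable (eqclass F Q K).
Proof.
move=> aug A U; rewrite !inE => /andP[AF /eqP AQ] /andP[UF /eqP UQ] AU.
have [x /setDP[xU xA] xAF] := aug A U AF UF AU.
have xQ : x \notin Q.
  apply: contra xA => xQ; have : x \in U :&: Q by rewrite inE xU.
  by rewrite UQ -AQ => /setIP[].
by exists x; rewrite ?inE ?xU ?xA ?xAF ?setU1I_notin ?AQ ?eqxx.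
Qed.

Lemma union_closed_eqclass F Q K : union_closed F -> union_closed (eqclass F Q K).
Proof.
move/union_closedP=> setU_F; apply/union_closedP=> A B.
rewrite !inE => /andP[AF /eqP AQ] /andP[BF /eqP BQ].
by rewrite setU_F // setIUl AQ BQ setUid eqxx.
Qed.

Lemma augmentable_setD F M : augmentable F -> {in F, forall L, M \subset L} ->
  augmentable [set L :\: M | L in F].
Proof.
move=> aug MF _ _ /imsetP[A AF ->] /imsetP[U UF ->] AUM.
have AU : A \subset U.
  apply/subsetP=> z zA; have [zM|zM] := boolP (z \in M); first exact: subsetP (MF U UF) z zM.
  have : z \in A :\: M by rewrite inE zM zA.
  by move/(subsetP (proper_sub AUM))/setDP=> [].
have AU' : A \proper U by rewrite properEneq AU andbT; apply: contraTneq AUM => ->; rewrite properxx.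
have [x /setDP[xU xA] xAF] := aug A U AF UF AU'.
have xM : x \notin M by apply: contra xA; apply: subsetP (MF A AF) x.
exists x; first by rewrite !inE xM xU (negbTE xA).
have -> : x |: (A :\: M) = (x |: A) :\: M.
  by apply/setP=> z; rewrite !inE; have [->|] := eqVneq z x; rewrite ?xM.
exact: imset_f.
Qed.

Lemma augmentable_child F Q K : augmentable F -> augmentable (child F Q K).
Proof.
by move=> aug; apply: augmentable_setD; [apply: augmentable_eqclass | move=> L; apply: bigcap_inf].
Qed.

Lemma union_closed_child F Q K : union_closed F -> union_closed (child F Q K).
Proof.
by move=> uc; apply: union_closed_imset; [move=> A B; apply: setDUl | apply: union_closed_eqclass].
Qed.

End SetFamilies.

Theorem mainTheorem5 (T : finType) (K : {set {set T}}) (Qp : {set T}) :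
  1 < #|domain K| ->
  Qp \proper domain K -> Qp != set0 ->
  [/\ (learning_space K -> learning_space (proj K Qp)),
      (wg_uclosed K -> wg_uclosed (proj K Qp)) &
      (learning_space K \/ wg_uclosed K ->
         forall K0, K0 \in K -> wg_uclosed (child K Qp K0))].
Proof.
move=> _ /proper_sub QpK Qp0.
have reduce : learning_space K \/ wg_uclosed K -> augmentable K /\ union_closed K.
  by case=> [/learning_spaceP[_ aug uc] | /wg_uclosedP].
split.
- move=> LS; have [[K0 _] _ _] := LS; have [aug uc] := reduce (or_introl LS).
  apply/learning_spaceP; split; first exact: knowledge_structure_proj.
  + exact: augmentable_proj.
  + exact: union_closed_proj.
- move=> /wg_uclosedP[aug uc]; apply/wg_uclosedP.
  by split; [apply: augmentable_proj | apply: union_closed_proj].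
- move=> /reduce[aug uc] K0 _; apply/wg_uclosedP.
  by split; [apply: augmentable_child | apply: union_closed_child].
Qed.
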